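(* Let $\mathcal{G}_n$ be the random graph described in the context and, for $\delta_n>0$ and $u\in\mathcal{V}_n^k$, let $$A_n^k(u)=\Big\{\big|N_n^k(u)-a_nV_n^k\big|\ge\sqrt{a_nV_n^k\delta_n}\Big\}.$$ Suppose the sequences $\gamma_n>0$ and $\delta_n>0$ satisfy $$\lim_{n\to\infty}\delta_n=\infty,\qquad\limsup_{n\to\infty}\frac{\delta_n}{\lambda_n}<\infty,\qquad\limsup_{n\to\infty}\frac{\gamma_n}{\delta_n}<\infty.$$ Then $\frac{\gamma_n}{n}\sum_{u\in\mathcal{V}_n^k}\mathbf{1}\{A_n^k(u)\}\Rightarrow0$ as $n\to\infty$, for all $k\in\{1,2\}$.
   Context: For each $n$, the node set $\mathcal{V}_n=\mathcal{V}_n^1\cup\mathcal{V}_n^2$ is a disjoint union of two communities of sizes $V_n^k=|\mathcal{V}_n^k|$ with $V_n^k/n\to v^k\in(0,\infty)$. The graph $\mathcal{G}_n$ is a stochastic block model: each unordered pair of distinct nodes is an edge independently, with probability $a_n=a\lambda_n/n$ if both are in the same community and $b_n=b\lambda_n/n$ otherwise, where $a>b>0$ are constants and $\lambda_n\to\infty$. $N_n^k(u)$ denotes the number of neighbors of $u$ in $\mathcal{V}_n^k$. $\Rightarrow$ denotes weak convergence (here to the constant $0$). *)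

From mathcomp Require Import all_boot all_order all_algebra.
From mathcomp Require Import all_classical all_reals all_analysis.
Set Implicit Arguments. Unset Strict Implicit. Unset Printing Implicit Defensive.
Import Order.TTheory GRing.Theory Num.Theory.
Import numFieldNormedType.Exports.
Local Open Scope classical_set_scope.
Local Open Scope ring_scope.

(* V : 'I_2 -> nat gives the community sizes |V^1| = V ord0, |V^2| = V ord_max.                          *)
Section SBM.
Variable R : realType.
Variable V : 'I_2 -> nat.

Definition sbm_node := 'I_(V ord0 + V ord_max).

Definition community (u : sbm_node) : 'I_2 :=
  if (u < V ord0)%N then ord0 else ord_max.

(* A graph is encoded by the indicator of its edges {u,v}, stored on the
   ordered pairs (u,v) with u < v; the other entries must be false. *)
Definition sbm_graph := {ffun sbm_node * sbm_node -> bool}.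

Definition adj (g : sbm_graph) (u v : sbm_node) : bool :=
  ((u < v)%N && g (u, v)) || ((v < u)%N && g (v, u)).

Definition edge_prob (p q : R) (u v : sbm_node) : R :=
  if community u == community v then p else q.

Definition sbm_weight (p q : R) (g : sbm_graph) : R :=
  (if [forall e : sbm_node * sbm_node, g e ==> (e.1 < e.2)%N] then 1 else 0) *
  \prod_(e : sbm_node * sbm_node | (e.1 < e.2)%N)
     (if g e then edge_prob p q e.1 e.2 else 1 - edge_prob p q e.1 e.2).

Definition sbm_expect (p q : R) (X : sbm_graph -> R) : R :=
  \sum_(g : sbm_graph) sbm_weight p q g * X g.

Definition nbr_count (g : sbm_graph) (u : sbm_node) (k : 'I_2) : nat :=
  #|[set v : sbm_node | adj g u v && (community v == k)]%SET|.

End SBM.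

(* Weak convergence of a sequence of random variables X_n to the constant c,
   given through the expectation functionals Ef f n = E[f(X_n)]:
   E[f(X_n)] -> f(c) for every bounded continuous f : R -> R. *)
Definition weak_cvg_const {R : realType} (Ef : (R -> R) -> nat -> R) (c : R) :=
  forall f : R -> R, continuous f -> (exists M : R, forall x, `|f x| <= M) ->
    Ef f @ \oo --> f c.

(* For u in community k, N^k(u) is a sum of |V^k| - 1 independent Bernoulli(a_n)
   edge indicators, so its moment generating function factorises over the edges.
   A two-sided Chernoff bound at t of order sqrt(delta_n / mu_n), where
   mu_n = a_n |V^k| is of order lambda_n, gives P(A_n^k(u)) = O(exp(-c delta_n))
   = O(delta_n^-2), with c depending only on limsup delta_n / lambda_n.  Hence
   E[gamma_n / n * #{u : A_n^k(u)}] = O((gamma_n / delta_n) (|V^k| / n) / delta_n),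
   which tends to 0, and a nonnegative sequence whose mean tends to 0 converges
   weakly to 0. *)

From mathcomp Require Import all_boot all_order all_algebra.
From mathcomp Require Import all_classical all_reals all_analysis.
From mathcomp Require Import ring lra.
Import Order.TTheory GRing.Theory Num.Theory.
Import numFieldNormedType.Exports.
Set Implicit Arguments. Unset Strict Implicit. Unset Printing Implicit Defensive.
Local Open Scope classical_set_scope.
Local Open Scope ring_scope.

Section SBMExpectation.
Variables (R : realType) (V : 'I_2 -> nat) (p q : R).
Local Notation node := (sbm_node V).
Local Notation graph := (sbm_graph V).
Local Notation E := (sbm_expect p q).

Definition upper_pair (e : node * node) : bool := (e.1 < e.2)%N.

(* The law of the graph as a product over all ordered pairs, those off the
   upper triangle carrying the point mass at [false]. *)
Definition pair_weight (e : node * node) (b : bool) : R :=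
  let r := edge_prob p q e.1 e.2 in
  if upper_pair e then (if b then r else 1 - r) else (if b then 0 else 1).

Lemma sbm_weightE (g : graph) : sbm_weight p q g = \prod_e pair_weight e (g e).
Proof.
rewrite /sbm_weight (bigID upper_pair predT) /= mulrC; congr (_ * _).
  by apply: eq_bigr => e ue; rewrite /pair_weight /upper_pair ue.
case: forallP => [g_upper | /forallP]; rewrite ?mul1r ?mul0r.
  apply/esym/big1 => e /negbTE ue; rewrite /pair_weight /= ue.
  by have := g_upper e; rewrite -/(upper_pair e) ue; case: (g e).
rewrite negb_forall => /existsP [e]; rewrite negb_imply => /andP [ge ue].
by rewrite (bigD1 e) //= /pair_weight /= (negbTE (ue : ~~ upper_pair e)) ge mul0r.
Qed.

Lemma sbm_expect_prod (h : node * node -> bool -> R) :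
  E (fun g => \prod_(e | upper_pair e) h e (g e)) =
  \prod_(e | upper_pair e) (edge_prob p q e.1 e.2 * h e true +
                            (1 - edge_prob p q e.1 e.2) * h e false).
Proof.
pose h' e b := pair_weight e b * (if upper_pair e then h e b else 1).
have -> : E (fun g => \prod_(e | upper_pair e) h e (g e)) =
          \sum_(g : graph) \prod_e h' e (g e).
  apply: eq_bigr => g _; rewrite sbm_weightE big_split /=; congr (_ * _).
  by rewrite big_mkcond; apply: eq_bigr => e _; case: (upper_pair e).
rewrite -bigA_distr_bigA /= [RHS]big_mkcond; apply: eq_bigr => e _.
by rewrite big_bool /h' /pair_weight; case: (upper_pair e); rewrite //= !mulr1 add0r.
Qed.

Lemma sbm_expect1 : E (fun _ : graph => 1) = 1.
Proof.
have := sbm_expect_prod (fun _ _ => 1); rewrite big1_eq => ->.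
by apply: big1 => e _; rewrite !mulr1 subrKC.
Qed.

Lemma eq_sbm_expect (X Y : graph -> R) : X =1 Y -> E X = E Y.
Proof. by move=> XY; apply: eq_bigr => g _; rewrite XY. Qed.

Lemma sbm_expectD (X Y : graph -> R) : E (fun g => X g + Y g) = E X + E Y.
Proof. by rewrite /sbm_expect -big_split; apply: eq_bigr => g _; rewrite mulrDr. Qed.

Lemma sbm_expectZ c (X : graph -> R) : E (fun g => c * X g) = c * E X.
Proof. by rewrite /sbm_expect mulr_sumr; apply: eq_bigr => g _; rewrite mulrCA. Qed.

Lemma sbm_expect_cst c : E (fun _ : graph => c) = c.
Proof. by rewrite -[c in LHS]mulr1 sbm_expectZ sbm_expect1 mulr1. Qed.

Lemma sbm_expect_sum (I : finType) (P : pred I) (X : I -> graph -> R) :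
  E (fun g => \sum_(i | P i) X i g) = \sum_(i | P i) E (X i).
Proof. by rewrite /sbm_expect; under eq_bigr do rewrite mulr_sumr; rewrite exchange_big. Qed.

Hypotheses (p01 : 0 <= p <= 1) (q01 : 0 <= q <= 1).

Lemma sbm_weight_ge0 (g : graph) : 0 <= sbm_weight p q g.
Proof.
rewrite sbm_weightE; apply: prodr_ge0 => e _.
move: p01 q01 => /andP [p0 p1] /andP [q0 q1].
rewrite /pair_weight /edge_prob.
by case: upper_pair; case: (g e); case: (community e.1 == community e.2); rewrite ?subr_ge0.
Qed.

Lemma ler_sbm_expect (X Y : graph -> R) : (forall g, X g <= Y g) -> E X <= E Y.
Proof. by move=> XY; apply: ler_sum => g _; apply: ler_wpM2l; [exact: sbm_weight_ge0|]. Qed.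

Lemma sbm_expect_ge0 (X : graph -> R) : (forall g, 0 <= X g) -> 0 <= E X.
Proof. by move=> X0; rewrite -(sbm_expect_cst 0); exact: ler_sbm_expect. Qed.

Lemma ler_norm_sbm_expect (X : graph -> R) : `|E X| <= E (fun g => `|X g|).
Proof.
apply: le_trans (ler_norm_sum _ _ _) _; apply: ler_sum => g _.
by rewrite normrM ger0_norm ?sbm_weight_ge0.
Qed.

End SBMExpectation.

Section NeighbourCount.
Variable V : 'I_2 -> nat.
Local Notation node := (sbm_node V).

Definition incident_in (u : node) (k : 'I_2) (e : node * node) : bool :=
  ((e.1 == u) && (community e.2 == k)) || ((e.2 == u) && (community e.1 == k)).

Lemma nbr_count_sum (g : sbm_graph V) u k :
  nbr_count g u k = (\sum_(e | upper_pair e) (g e && incident_in u k e))%N.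
Proof.
pose P (x y : node) := (x < y)%N && g (x, y).
have -> : nbr_count g u k = (\sum_v (P u v && (community v == k)) +
                             \sum_v (P v u && (community v == k)))%N.
  rewrite /nbr_count -sum1_card big_mkcond -big_split /=.
  apply: eq_bigr => v _; rewrite inE /adj /P.
  by case: (ltngtP u v) => //=; case: (g _); case: (_ == k).
have -> : (\sum_(e | upper_pair e) (g e && incident_in u k e) =
  \sum_x \sum_y (P x y && (x == u) && (community y == k)) +
  \sum_x \sum_y (P x y && (y == u) && (community x == k)))%N.
  rewrite !pair_bigA -big_split big_mkcond /=; apply: eq_bigr => [[x y]] _.
  rewrite /upper_pair /incident_in /P /=.
  case: (eqVneq x u) => [->|xu]; case: (eqVneq y u) => [->|yu] /=;
    rewrite ?ltnn //=; case: ltnP => //= _; case: (g _) => //=; by case: (_ == k).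
congr (_ + _)%N; apply/esym.
  rewrite (bigD1 u) //= [X in (_ + X)%N]big1 ?addn0 => [|x /negbTE xu].
    by apply: eq_bigr => y _; rewrite eqxx andbT.
  by apply: big1 => y _; rewrite xu andbF.
apply: eq_bigr => x _.
rewrite (bigD1 u) //= [X in (_ + X)%N]big1 ?addn0 => [|y /negbTE yu].
  by rewrite eqxx andbT.
by rewrite yu andbF.
Qed.

Lemma card_community k : #|[set v : node | community v == k]%SET| = V k.
Proof.
rewrite -sum1_card big_mkcond /= big_split_ord /=.
have c0 (i : 'I_(V ord0)) : community (lshift (V ord_max) i) = ord0.
  by rewrite /community /= ltn_ord.
have c1 (i : 'I_(V ord_max)) : community (rshift (V ord0) i) = ord_max.
  by rewrite /community /= ltnNge leq_addr.
under eq_bigr do rewrite inE c0.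
under [X in (_ + X)%N]eq_bigr do rewrite inE c1.
have [->|->] : k = ord0 \/ k = ord_max.
  by case: k => [[|[|//]]] ?; [left | right]; exact: val_inj.
  by rewrite eqxx big1_eq addn0 sum1_card card_ord.
by rewrite eqxx big1_eq add0n sum1_card card_ord.
Qed.

Lemma card_incident_in (u : node) k : community u = k ->
  (\sum_(e | upper_pair e) (incident_in u k e : nat))%N = (V k).-1.
Proof.
move=> uk; have := nbr_count_sum [ffun _ => true] u k.
under [X in _ = X -> _]eq_bigr do rewrite ffunE /=.
move=> <-; rewrite /nbr_count -(card_community k).
rewrite (cardsD1 u [set v : node | community v == k]%SET) inE uk eqxx add1n /=.
apply: eq_card => v; rewrite !inE /adj !ffunE !andbT.
by rewrite neq_ltn orbC.
Qed.

End NeighbourCount.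

Section ExpBounds.
Variable R : realType.
Implicit Types x : R.

Lemma exprn1D_le_expR x m : -1 <= x -> (1 + x) ^+ m <= expR (m%:R * x).
Proof.
by move=> x_ge; rewrite expRM_natl; apply: lerXn2r;
  rewrite ?nnegrE ?expR_ge0 ?expR_ge1Dx //; lra.
Qed.

Lemma expR_le1DxD2x2 x : 0 <= x <= 1/2 -> expR x <= 1 + x + 2 * x ^+ 2.
Proof.
move=> /andP [x0 x1].
have e_pos : 0 < expR (- x) := expR_gt0 _.
have e_ge : 1 - x <= expR (- x) by have := expR_ge1Dx (- x).
have cube : 0 <= x ^+ 2 * (1 - 2 * x) by apply: mulr_ge0; [exact: sqr_ge0 | lra].
rewrite -[expR x]invrK -expRN -(@ler_pM2l _ (expR (- x))) // mulfV ?gt_eqF //.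
apply: le_trans (_ : (1 - x) * (1 + x + 2 * x ^+ 2) <= _); first nra.
apply: ler_wpM2r => //; nra.
Qed.

Lemma expRN_le1BxDx2 x : 0 <= x -> expR (- x) <= 1 - x + x ^+ 2.
Proof.
move=> x0; have e_pos : 0 < expR x := expR_gt0 _.
have half_sqr : (1 + x / 2) ^+ 2 <= expR x.
  rewrite [x in expR x]splitr expRD -expr2.
  by apply: lerXn2r; rewrite ?nnegrE ?expR_ge0 ?expR_ge1Dx //; lra.
rewrite expRN -(@ler_pM2l _ (expR x)) // mulfV ?gt_eqF //.
apply: le_trans (_ : 1 <= (1 + x / 2) ^+ 2 * (1 - x + x ^+ 2)) _; last first.
  by apply: ler_wpM2r => //; nra.
have -> : (1 + x / 2) ^+ 2 * (1 - x + x ^+ 2) =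
          1 + x ^+ 2 / 4 + 3 * x ^+ 3 / 4 + x ^+ 4 / 4 by field.
have := exprn_ge0 2 x0; have := exprn_ge0 3 x0; have := exprn_ge0 4 x0; lra.
Qed.

Lemma expRN_le_sqr x : 0 < x -> expR (- x) <= 2 / x ^+ 2.
Proof.
move=> x0; have x2_pos : 0 < x ^+ 2 by exact: exprn_gt0.
have : 1 + x ^+ 2 / 2 <= expR x by have := @expR_ge1Dxn R x 1 (ltW x0).
rewrite expRN -[2 / _]invf_div lef_pV2 ?posrE ?expR_gt0 ?divr_gt0 //; lra.
Qed.

Lemma expR_half_le2 : expR (1/2 : R) <= 2.
Proof. by apply: le_trans (expR_le1DxD2x2 _) _; lra. Qed.

Lemma upper_chernoff_exponent_le (m r mu s t : R) :
  0 <= m * r <= mu -> 0 <= t <= 1/2 ->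
  - t * (mu + s) + m * (r * (expR t - 1)) <= 2 * mu * t ^+ 2 - t * s + t.
Proof.
move=> /andP [mr0 mr_le] t01; have /andP [t0 _] := t01.
have hi := expR_le1DxD2x2 t01; have lo := expR_ge1Dx t.
have : m * r * (expR t - 1) <= mu * (t + 2 * t ^+ 2) by apply: ler_pM; lra.
nra.
Qed.

Lemma lower_chernoff_exponent_le (m r mu s t : R) :
  0 <= r <= 1 -> mu - r <= m * r -> 0 <= mu -> 0 <= t ->
  t * (mu - s) + m * (r * (expR (- t) - 1)) <= 2 * mu * t ^+ 2 - t * s + t.
Proof.
move=> /andP [r0 r1] mr_ge mu0 t0.
have hi := expRN_le1BxDx2 t0; have lo := expR_ge1Dx (- t).
have e_le1 : expR (- t) <= 1 by rewrite expR_le1 oppr_le0.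
have : m * r * (expR (- t) - 1) <= (mu - r) * (expR (- t) - 1).
  by apply: ler_wnM2r; lra.
have : r * (1 - expR (- t)) <= 1 * t by apply: ler_pM; lra.
have : 0 <= mu * t ^+ 2 by apply: mulr_ge0 => //; exact: sqr_ge0.
nra.
Qed.

Lemma indicator_le_expR (x mu s t : R) : 0 <= t ->
  (if s <= `|x - mu| then 1 else 0) <=
  expR (t * (x - (mu + s))) + expR (- t * (x - (mu - s))).
Proof.
move=> t0; have ge1 (y : R) : 0 <= y -> 1 <= expR y.
  by move=> y0; apply: le_trans (expR_ge1Dx y); rewrite lerDl.
have e1 := expR_ge0 (t * (x - (mu + s))); have e2 := expR_ge0 (- t * (x - (mu - s))).
case: ifP => [|_]; last exact: addr_ge0.
rewrite ler_normr => /orP [] dev.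
  rewrite -[1]addr0; apply: lerD => //; apply/ge1/mulr_ge0 => //; lra.
rewrite -[1]add0r mulNr -mulrN; apply: lerD => //; apply/ge1/mulr_ge0 => //; lra.
Qed.

Lemma chernoff_exponent_choice (mu d D : R) :
  0 < mu -> 0 < d -> 0 <= D -> d / mu <= D ->
  exists2 t, 0 <= t <= 1/2 &
    2 * mu * t ^+ 2 - t * Num.sqrt (mu * d) + t <= 1/2 - d / (8 * (1 + D)).
Proof.
move=> mu0 d0 D0 dmu_le.
set c := 1 / (4 * (1 + D)); set r := Num.sqrt (d / mu).
have D1 : 1 + D != 0 by rewrite gt_eqF //; lra.
have c0 : 0 < c by rewrite divr_gt0 //; lra.
have c_le : c <= 1/4 by rewrite ler_pdivrMr; lra.
have c_half : c * d / 2 = d / (8 * (1 + D)) by rewrite /c; field.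
have r0 : 0 <= r := sqrtr_ge0 _.
have r2 : r ^+ 2 = d / mu by rewrite sqr_sqrtr // divr_ge0 // ltW.
have sqrt_mud : Num.sqrt (mu * d) = mu * r.
  rewrite -[in RHS](ger0_norm (ltW mu0)) -sqrtr_sqr -sqrtrM ?sqr_ge0 //.
  by congr Num.sqrt; field; rewrite gt_eqF.
have c2D : c ^+ 2 * D <= 1/16.
  have : D <= (1 + D) ^+ 2 by nra.
  have -> : c ^+ 2 * D = D / (16 * (1 + D) ^+ 2) by rewrite /c; field.
  by rewrite ler_pdivrMr ?mulr_gt0 ?exprn_gt0 //; lra.
have t2_le : (c * r) ^+ 2 <= 1/16.
  rewrite exprMn r2; apply: le_trans c2D.
  by apply: ler_wpM2l => //; exact: sqr_ge0.
exists (c * r).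
  by apply/andP; split; [exact: mulr_ge0 (ltW c0) r0 | nra].
rewrite sqrt_mud -c_half.
have -> : 2 * mu * (c * r) ^+ 2 - c * r * (mu * r) = (2 * c - 1) * c * d.
  have -> : c * r * (mu * r) = c * mu * r ^+ 2 by ring.
  by rewrite exprMn r2; field; rewrite gt_eqF.
have : c * r <= 1/4 by nra.
have : 0 <= (1/4 - c) * (c * d) by apply: mulr_ge0; [lra | exact: mulr_ge0 (ltW c0) (ltW d0)].
nra.
Qed.

End ExpBounds.

Section NeighbourCountTail.
Variables (R : realType) (V : 'I_2 -> nat) (p q : R).
Hypotheses (p01 : 0 <= p <= 1) (q01 : 0 <= q <= 1).
Variables (u : sbm_node V) (k : 'I_2).
Hypothesis uk : community u = k.
Local Notation E := (sbm_expect p q).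
Local Notation N g := (nbr_count g u k).
Local Notation mu := (p * (V k)%:R).

Lemma sbm_expect_exprn_nbr_count z :
  E (fun g => z ^+ N g) = (1 + p * (z - 1)) ^+ (V k).-1.
Proof.
under eq_sbm_expect do rewrite nbr_count_sum expr_sum.
rewrite (sbm_expect_prod p q (fun e b => z ^+ (b && incident_in u k e))) /=.
rewrite -(card_incident_in uk) expr_sum; apply: eq_bigr => e _.
case inc: (incident_in u k e) => /=; last by rewrite !expr0 !mulr1 subrKC.
have -> : edge_prob p q e.1 e.2 = p.
  rewrite /edge_prob; move: inc => /orP [] /andP [/eqP -> /eqP ->];
  by rewrite uk eqxx.
by rewrite expr1 expr0 mulr1; ring.
Qed.

Lemma sbm_expect_expR_nbr_count_le t :
  E (fun g => expR (t * (N g)%:R)) <= expR (((V k).-1)%:R * (p * (expR t - 1))).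
Proof.
under eq_sbm_expect do rewrite mulrC expRM_natl.
rewrite sbm_expect_exprn_nbr_count; apply: exprn1D_le_expR.
have := expR_gt0 t; move: p01 => /andP [p0 p1]; nra.
Qed.

Lemma sbm_nbr_count_tail_le (s t : R) : 0 <= t <= 1/2 ->
  E (fun g => if s <= `|(N g)%:R - mu| then 1 else 0) <=
  2 * expR (2 * mu * t ^+ 2 - t * s + t).
Proof.
move=> t01; have /andP [t0 _] := t01; have /andP [p0 p1] := p01.
have mu0 : 0 <= mu by exact: mulr_ge0.
have pred_mu : mu - p <= ((V k).-1)%:R * p /\ ((V k).-1)%:R * p <= mu.
  case: (V k) => [|m] /=; first by rewrite !mul0r mulr0 add0r oppr_le0.
  have m0 : 0 <= m%:R :> R by [].
  by rewrite -natr1; split; nra.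
apply: le_trans (_ : E (fun g => expR (t * ((N g)%:R - (mu + s))) +
                                 expR (- t * ((N g)%:R - (mu - s)))) <= _).
  by apply: ler_sbm_expect => // g; exact: indicator_le_expR.
have split_exp (c d x : R) : expR (c * (x - d)) = expR (- c * d) * expR (c * x).
  by rewrite -expRD; congr expR; ring.
under eq_sbm_expect do rewrite (split_exp t (mu + s)) (split_exp (- t) (mu - s)).
rewrite sbm_expectD !sbm_expectZ opprK.
have upper : expR (- t * (mu + s)) * E (fun g => expR (t * (N g)%:R)) <=
             expR (2 * mu * t ^+ 2 - t * s + t).
  apply: le_trans (ler_wpM2l (expR_ge0 _) (sbm_expect_expR_nbr_count_le t)) _.
  rewrite -expRD ler_expR; apply: upper_chernoff_exponent_le => //.
  by rewrite mulr_ge0 //=; case: pred_mu.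
have lower : expR (t * (mu - s)) * E (fun g => expR (- t * (N g)%:R)) <=
             expR (2 * mu * t ^+ 2 - t * s + t).
  apply: le_trans (ler_wpM2l (expR_ge0 _) (sbm_expect_expR_nbr_count_le (- t))) _.
  by rewrite -expRD ler_expR; apply: lower_chernoff_exponent_le => //; case: pred_mu.
by apply: le_trans (lerD upper lower) _; lra.
Qed.

End NeighbourCountTail.


Section DeviantNodes.
Variables (R : realType) (V : 'I_2 -> nat).

Definition deviant_nodes (g : sbm_graph V) (k : 'I_2) (p d : R) : {set sbm_node V} :=
  [set u | (community u == k) &&
           (Num.sqrt (p * (V k)%:R * d) <= `|(nbr_count g u k)%:R - p * (V k)%:R|)].

Variables (p q : R).
Hypotheses (p01 : 0 <= p <= 1) (q01 : 0 <= q <= 1).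
Variable k : 'I_2.
Local Notation E := (sbm_expect p q).
Local Notation mu := (p * (V k)%:R).

Lemma sbm_expect_card_deviation_le (s t : R) : 0 <= t <= 1/2 ->
  E (fun g : sbm_graph V => #|[set u | (community u == k) &&
                         (s <= `|(nbr_count g u k)%:R - mu|)]%SET|%:R) <=
  (V k)%:R * (2 * expR (2 * mu * t ^+ 2 - t * s + t)).
Proof.
move=> t01.
have card_sum (g : sbm_graph V) :
    #|[set u | (community u == k) && (s <= `|(nbr_count g u k)%:R - mu|)]%SET|%:R =
    \sum_(u | community u == k) (if s <= `|(nbr_count g u k)%:R - mu| then 1 else 0) :> R.
  rewrite -sum1_card natr_sum big_mkcond [RHS]big_mkcond; apply: eq_bigr => u _.
  by rewrite inE; case: (community u == k); case: (s <= _).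
under eq_sbm_expect do rewrite card_sum.
rewrite sbm_expect_sum.
apply: le_trans (_ : \sum_(u | community u == k) (2 * expR (2 * mu * t ^+ 2 - t * s + t))
                     <= _).
  by apply: ler_sum => u /eqP uk; exact: sbm_nbr_count_tail_le.
have card_k : #|(fun u : sbm_node V => community u == k)| = V k.
  by rewrite -(card_community V k); apply: eq_card => u; rewrite inE.
by rewrite sumr_const card_k [in X in _ <= X]mulr_natl.
Qed.

Lemma sbm_expect_card_deviant_le (d D : R) :
  0 < mu -> 0 < d -> 0 <= D -> d / mu <= D ->
  E (fun g : sbm_graph V => #|deviant_nodes g k p d|%:R) <=
  (V k)%:R * (512 * (1 + D) ^+ 2 / d ^+ 2).
Proof.
move=> mu0 d0 D0 dmu_le.
have [t t01 exponent_le] := chernoff_exponent_choice mu0 d0 D0 dmu_le.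
apply: le_trans (sbm_expect_card_deviation_le _ t01) _; apply: ler_wpM2l => //.
set x := d / (8 * (1 + D)); have x0 : 0 < x by rewrite divr_gt0 //; lra.
apply: le_trans (_ : 2 * (expR (1/2) * expR (- x)) <= _).
  by rewrite -expRD ler_wpM2l // ler_expR.
apply: le_trans (_ : 2 * (2 * (2 / x ^+ 2)) <= _).
  by rewrite ler_wpM2l //; apply: ler_pM; rewrite ?expR_ge0 ?expR_half_le2 ?expRN_le_sqr.
by rewrite le_eqVlt; apply/orP; left; apply/eqP; rewrite /x; field; apply/andP; split;
  rewrite gt_eqF //; lra.
Qed.

End DeviantNodes.

Lemma limn_esup_lt_pinfty_ub (R : realType) (u : nat -> R) :
  (limn_esup (fun n => (u n)%:E) < +oo)%E -> exists C : R, \forall n \near \oo, u n <= C.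
Proof.
rewrite limn_esup_lim (cvg_lim _ (@cvg_esups_inf R (fun n => (u n)%:E))) //.
move=> /ereal_inf_lt [_ [n0 _ <-]] sup_lt.
have u_le_sup n : (n0 <= n)%N -> ((u n)%:E <= esups (fun n => (u n)%:E) n0)%E.
  by move=> n0n; apply: ereal_sup_ubound; exists n.
exists (fine (esups (fun n => (u n)%:E) n0)).
(* The tail supremum is finite: it lies above [u n0] and below [+oo]. *)
apply: filterS (nbhs_infty_ge n0) => n /u_le_sup; have := u_le_sup n0 (leqnn n0).
by move: sup_lt; case: (esups _ n0).
Qed.

Lemma cont_bounded_dist_le_affine (R : realType) (f : R -> R) (M e : R) :
  {for 0, continuous f} -> (forall x, `|f x| <= M) -> 0 < e ->
  exists2 K, 0 <= K & forall x, 0 <= x -> `|f 0 - f x| <= e + K * x.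
Proof.
move=> cf fM e0.
have [eta /= eta0 near_f] := iffLR (nbhs_ballP _ _) (cvgr_dist_lt _ _ cf _ e0).
have M0 : 0 <= M := le_trans (normr_ge0 _) (fM 0).
have K0 : 0 <= 2 * M / eta by apply: divr_ge0; [exact: mulr_ge0 | exact: ltW].
exists (2 * M / eta) => // x x0; have K_x0 := mulr_ge0 K0 x0.
have [x_lt|eta_le] := ltP x eta.
  have : `|f 0 - f x| < e by apply: near_f; rewrite -ball_normE /ball_ /= sub0r normrN ger0_norm.
  lra.
apply: le_trans (_ : 2 * M <= _).
  by apply: le_trans (ler_normB _ _) _; have := fM 0; have := fM x; lra.
have : 2 * M * 1 <= 2 * M * (x / eta) by rewrite ler_wpM2l ?mulr_ge0 // ler_pdivlMr ?mul1r.
rewrite mulr1 mulrA mulrAC; lra.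
Qed.

Lemma sbm_weak_cvg0_of_expect (R : realType) (V : nat -> 'I_2 -> nat) (p q : nat -> R)
    (X : forall n, sbm_graph (V n) -> R) :
  (forall n, 0 <= p n <= 1) -> (forall n, 0 <= q n <= 1) -> (forall n g, 0 <= X n g) ->
  sbm_expect (p n) (q n) (X n) @[n --> \oo] --> 0 ->
  weak_cvg_const (fun f n => sbm_expect (p n) (q n) (fun g => f (X n g))) 0.
Proof.
move=> p01 q01 X0 EX0 f cf [M fM]; apply/cvgrPdist_le => e e0.
have e2_gt0 : 0 < e / 2 by rewrite divr_gt0.
have [K K0 f_affine] := cont_bounded_dist_le_affine (cf 0) fM e2_gt0.
have : K * sbm_expect (p n) (q n) (X n) @[n --> \oo] --> 0.
  by rewrite -(mulr0 K); exact: cvgMr.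
move=> /cvgr0_norm_le /(_ _ e2_gt0); apply: filterS => n KEX.
have -> : f 0 - sbm_expect (p n) (q n) (fun g => f (X n g)) =
          sbm_expect (p n) (q n) (fun g => f 0 + (-1) * f (X n g)).
  by rewrite sbm_expectD sbm_expectZ sbm_expect_cst mulN1r.
apply: le_trans (ler_norm_sbm_expect (p01 n) (q01 n) _) _.
apply: le_trans (ler_sbm_expect (p01 n) (q01 n) (Y := fun g => e / 2 + K * X n g) _) _.
  by move=> g; rewrite mulN1r; exact: f_affine.
rewrite sbm_expectD sbm_expect_cst sbm_expectZ.
have EX_ge0 := sbm_expect_ge0 (p01 n) (q01 n) (X0 n).
by rewrite ger0_norm ?mulr_ge0 // in KEX; lra.
Qed.

Lemma sbm_expect_scaled_deviant_le (R : realType) (V : 'I_2 -> nat) (n : nat) (k : 'I_2)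
    (a q lam gam del w w' Cd Cg : R) :
  0 < a -> 0 < lam -> 0 <= gam -> 0 < del ->
  0 <= a * lam / n%:R <= 1 -> 0 <= q <= 1 ->
  0 < w -> w <= (V k)%:R / n%:R <= w' -> del / lam <= Cd -> gam / del <= Cg ->
  sbm_expect (a * lam / n%:R) q
    (fun g : sbm_graph V => gam / n%:R * #|deviant_nodes g k (a * lam / n%:R) del|%:R)
  <= 512 * (1 + Cd / (a * w)) ^+ 2 * Cg * w' / del.
Proof.
move=> a0 lam0 gam0 del0 p01 q01 w0 /andP [w_le le_w'] Cd_ge Cg_ge.
have n0 : 0 < n%:R :> R.
  by case: n w_le le_w' {p01} => [|//]; rewrite invr0 mulr0 => /(lt_le_trans w0); rewrite ltxx.
have Vn0 : 0 < (V k)%:R / n%:R :> R := lt_le_trans w0 w_le.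
have V0 : 0 < (V k)%:R :> R by move: Vn0; rewrite pmulr_lgt0 // invr_gt0.
have mu_eq : a * lam / n%:R * (V k)%:R = a * lam * ((V k)%:R / n%:R).
  by rewrite mulrAC mulrA.
have mu0 : 0 < a * lam / n%:R * (V k)%:R by rewrite mu_eq; do 2 apply: mulr_gt0 => //.
have dl0 : 0 < del / lam by rewrite divr_gt0.
have aw0 : 0 < a * w by exact: mulr_gt0.
set D := Cd / (a * w).
have D0 : 0 <= D by apply/divr_ge0/ltW => //; exact: le_trans (ltW dl0) Cd_ge.
have dmu_le : del / (a * lam / n%:R * (V k)%:R) <= D.
  rewrite mu_eq (_ : del / _ = del / lam * (a * ((V k)%:R / n%:R))^-1); last first.
    by field; rewrite !gt_eqF //.
  apply: ler_pM => //; first exact: ltW.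
    by rewrite invr_ge0; apply/ltW/mulr_gt0.
  have aVn0 : 0 < a * ((V k)%:R / n%:R) by exact: mulr_gt0.
  by rewrite lef_pV2 ?posrE // ler_pM2l.
rewrite sbm_expectZ.
apply: le_trans (_ : gam / n%:R * ((V k)%:R * (512 * (1 + D) ^+ 2 / del ^+ 2)) <= _).
  apply: ler_wpM2l; first by apply: divr_ge0 => //; exact: ltW.
  exact: sbm_expect_card_deviant_le.
have -> : gam / n%:R * ((V k)%:R * (512 * (1 + D) ^+ 2 / del ^+ 2)) =
          512 * (1 + D) ^+ 2 * (gam / del * ((V k)%:R / n%:R)) / del.
  by field; rewrite !gt_eqF //.
rewrite -(mulrA _ Cg) ler_pM2r ?invr_gt0 // ler_pM2l; last first.
  by apply: mulr_gt0; [rewrite ltr0n | apply: exprn_gt0; lra].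
by apply: ler_pM => //; apply: divr_ge0 => //; exact: ltW.
Qed.

Theorem lemmaB2 (R : realType) (V : nat -> 'I_2 -> nat) (v : 'I_2 -> R)
  (a b : R) (lam gam del : nat -> R)
  (hv : forall k, 0 < v k)
  (hV : forall k, (fun n => (V n k)%:R / n%:R) @ \oo --> v k)
  (hb : 0 < b) (hab : b < a)
  (hprob : forall n, 0 <= a * lam n / n%:R <= 1 /\ 0 <= b * lam n / n%:R <= 1)
  (hlam : lam @ \oo --> +oo)
  (hgam : forall n, 0 < gam n) (hdel : forall n, 0 < del n)
  (hdelcvg : del @ \oo --> +oo)
  (hdellam : (limn_esup (fun n => (del n / lam n)%:E) < +oo)%E)
  (hgamdel : (limn_esup (fun n => (gam n / del n)%:E) < +oo)%E) :
  forall k : 'I_2,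
    weak_cvg_const
      (fun (f : R -> R) (n : nat) =>
         sbm_expect (a * lam n / n%:R) (b * lam n / n%:R)
           (fun g : sbm_graph (V n) =>
              f (gam n / n%:R *
                 (#|[set u : sbm_node (V n) | (community u == k) &&
                     (`|(nbr_count g u k)%:R - a * lam n / n%:R * (V n k)%:R|
                        >= Num.sqrt (a * lam n / n%:R * (V n k)%:R * del n))]%SET|)%:R)))
      0.
Proof.
move=> k; pose X n (g : sbm_graph (V n)) :=
  gam n / n%:R * #|deviant_nodes g k (a * lam n / n%:R) (del n)|%:R.
have X0 n g : 0 <= X n g by rewrite mulr_ge0 // divr_ge0 // ltW.
apply: (sbm_weak_cvg0_of_expect (X := X) (fun n => (hprob n).1) (fun n => (hprob n).2) X0).
have [Cd del_lam_le] := limn_esup_lt_pinfty_ub hdellam.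
have [Cg gam_del_le] := limn_esup_lt_pinfty_ub hgamdel.
pose C := 512 * (1 + Cd / (a * (v k / 2))) ^+ 2 * Cg * (2 * v k).
apply: (@squeeze_cvgr _ _ _ _ (fun=> 0) (fun n => C / del n)); last 2 first.
- exact: cvg_cst.
- by rewrite -(mulr0 C); apply: cvgMr; apply/gtr0_cvgV0 => //; exact: nearW.
have vk0 := hv k.
near=> n; apply/andP; split; first exact: (sbm_expect_ge0 (hprob n).1 (hprob n).2 (X0 n)).
apply: sbm_expect_scaled_deviant_le (ltW (hgam n)) (hdel n) (hprob n).1 (hprob n).2 _ _ _ _.
- exact: lt_trans hb hab.
- by near: n; apply: (iffLR (cvgryPgt _) hlam).
- by rewrite divr_gt0.
- by apply/andP; split; near: n; [apply: cvgr_ge (hV k) _ _ | apply: cvgr_le (hV k) _ _]; lra.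
- by near: n.
- by near: n.
Unshelve. all: by end_near.
Qed.
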